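(* Let $\mathfrak{q}$ be an $n\times n$ quantum parameter matrix over a field $k$, $V$ a $k$-vector space with basis $v_1,\dots,v_n$, and $r$ the number of distinct rows of $\mathfrak{q}$. Then $\mathrm{Aut}_{\mathrm{gr}}(S_{\mathfrak{q}}(V))\cong\big(\prod_{i=1}^r\mathrm{GL}(n_i,k)\big)\rtimes G$ for some positive integers $n_1,\dots,n_r$ and a group $G\subseteq\mathfrak{S}_r$ with the property that $H\subseteq G$ for every subgroup $H\subseteq\mathfrak{S}_r$ with $[r]^2/H=[r]^2/G$. Here $G=\mathrm{Stab}(\mathfrak{q})$.
   Context: An $n\times n$ quantum parameter matrix is a matrix $\mathfrak{q}=(q_{ij})$ over $k$ with $q_{ii}=1$ and $q_{ij}q_{ji}=1$. $S_{\mathfrak{q}}(V)$ is the $k$-algebra generated by $v_1,\dots,v_n$ with relations $v_jv_i=q_{ij}v_iv_j$, graded by $\deg v_i=1$; $\mathrm{Aut}_{\mathrm{gr}}$ is its group of degree-preserving algebra automorphisms. The blocks of $\mathfrak{q}$ are the classes of the partition of $[n]$ with $i\sim j$ iff rows $i,j$ are identical (there are $r$ of them); $\mathfrak{q}_{BC}=(q_{ij})_{i\in B,j\in C}$; $\mathfrak{S}_r$ permutes the blocks and $\mathrm{Stab}(\mathfrak{q})=\{\sigma\in\mathfrak{S}_r:|\sigma(B)|=|B|\text{ and }\mathfrak{q}_{BC}=\mathfrak{q}_{\sigma(B)\sigma(C)}\text{ for all blocks }B,C\}$. $\mathfrak{S}_r$ acts diagonally on $[r]^2$ and $[r]^2/H$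 denotes the partition of $[r]^2$ into $H$-orbits. *)

From HB Require Import structures.
From mathcomp Require Import all_boot all_order all_algebra all_fingroup.
Set Implicit Arguments. Unset Strict Implicit. Unset Printing Implicit Defensive.
Import GRing.Theory.
Local Open Scope ring_scope.

Section QuantumSymmetric.
Variable k : fieldType.

Definition qparam (n : nat) (q : 'M[k]_n) : Prop :=
  (forall i, q i i = 1) /\ (forall i j, q i j * q j i = 1).

Definition alg_hom (A B : algType k) (f : A -> B) : Prop :=
  (forall (a : k) (x y : A), f (a *: x + y) = a *: f x + f y) /\
  (forall x y : A, f (x * y) = f x * f y) /\ f 1 = 1.

Definition q_relations (n : nat) (q : 'M[k]_n) (B : algType k) (b : 'I_n -> B) : Prop :=
  forall i j, b j * b i = q i j *: (b i * b j).

(* (A, v) is the k-algebra generated by v_1..v_n with relations v_j v_i = q_ij v_i v_j,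
   i.e. S_q(V) with v_i the basis of V, given by its universal property. *)
Definition is_Sq (n : nat) (q : 'M[k]_n) (A : algType k) (v : 'I_n -> A) : Prop :=
  q_relations q v /\
  forall (B : algType k) (b : 'I_n -> B), q_relations q b ->
    (exists f : A -> B, alg_hom f /\ forall i, f (v i) = b i) /\
    (forall f1 f2 : A -> B, alg_hom f1 -> alg_hom f2 ->
       (forall i, f1 (v i) = f2 (v i)) -> f1 =1 f2).

Definition homog (n : nat) (A : algType k) (v : 'I_n -> A) (d : nat) (x : A) : Prop :=
  exists c : d.-tuple 'I_n -> k,
    x = \sum_(t : d.-tuple 'I_n) c t *: \prod_(i < d) v (tnth t i).

(* graded (degree-preserving) k-algebra automorphisms: elements of Aut_gr(S_q(V));
   the group law is composition *)
Definition gr_aut (n : nat) (A : algType k) (v : 'I_n -> A) (f : A -> A) : Prop :=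
  alg_hom f /\ bijective f /\ (forall d x, homog v d x -> homog v d (f x)).

(* blocks: block c = {i | beta i = c}; beta labels the classes of identical rows *)
Definition block (n r : nat) (beta : 'I_n -> 'I_r) (c : 'I_r) : {set 'I_n} :=
  [set i | beta i == c].

(* the submatrix q_{BC}, rows/columns in increasing order *)
Definition subq (n : nat) (q : 'M[k]_n) (B C : {set 'I_n}) : seq (seq k) :=
  [seq [seq q i j | j <- enum C] | i <- enum B].

Definition Stab (n r : nat) (q : 'M[k]_n) (beta : 'I_n -> 'I_r) : {set {perm 'I_r}} :=
  [set s : {perm 'I_r} |
    [forall b : 'I_r, #|block beta (s b)| == #|block beta b|] &&
    [forall b : 'I_r, forall c : 'I_r,
       subq q (block beta b) (block beta c) == subq q (block beta (s b)) (block beta (s c))]].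

(* transport of a square matrix along an equality of sizes (identity if sizes differ) *)
Definition mxtransp (m m' : nat) (M : 'M[k]_m) : 'M[k]_m' :=
  match m =P m' with
  | ReflectT e => castmx (e, e) M
  | ReflectF _ => 1%:M
  end.

(* the semidirect product (prod_c GL(n_c,k)) x| G, G acting by permuting factors:
   elements are pairs (g, s); (g, s) (h, t) = (c |-> g_c h_{s c}, s * t)
   (mathcomp: (s * t) x = t (s x), so this is a left action). *)
Definition sd_elt (r : nat) (n_ : 'I_r -> nat) : Type :=
  ({dffun forall c : 'I_r, 'M[k]_(n_ c)} * {perm 'I_r})%type.

Definition sd_in (r : nat) (n_ : 'I_r -> nat) (G : {set {perm 'I_r}}) (x : sd_elt n_) : Prop :=
  (forall c, x.1 c \in unitmx) /\ x.2 \in G.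

Definition sd_mul (r : nat) (n_ : 'I_r -> nat) (x y : sd_elt n_) : sd_elt n_ :=
  (finfun (fun c : 'I_r => x.1 c *m @mxtransp (n_ (x.2 c)) (n_ c) (y.1 (x.2 c)) : 'M[k]_(n_ c)), (x.2 * y.2)%g).

End QuantumSymmetric.

(* [r]^2/H : the partition of [r]^2 into orbits of the diagonal action of H *)
Definition diagorb (r : nat) (H : {set {perm 'I_r}}) (x : 'I_r * 'I_r) : {set 'I_r * 'I_r} :=
  [set ((h : {perm 'I_r}) x.1, h x.2) | h in H].

Definition diag_orbit_partition (r : nat) (H : {set {perm 'I_r}}) : {set {set 'I_r * 'I_r}} :=
  [set diagorb H x | x : 'I_r * 'I_r].

From Pilot Require Import Defs.
From HB Require Import structures.
From mathcomp Require Import all_boot all_order all_algebra all_fingroup.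
From mathcomp Require Import ring.
Set Implicit Arguments. Unset Strict Implicit. Unset Printing Implicit Defensive.
Import GRing.Theory.
Local Open Scope ring_scope.

(* A graded automorphism f is determined by the matrix M of its action on the
   generators, which are linearly independent.  Comparing the coefficients of
   v_e v_a on both sides of f(v_i) v_e = w f(v_i), in a truncated polynomial
   ring and in a truncated quantum plane (two small representations of S_q),
   gives q_ea = q_ji whenever M_ai and M_ej are nonzero.  Hence M is
   block-monomial for the blocks of identical rows of q, through a permutation
   s of the blocks that preserves their sizes and the submatrices q_BC, that
   is s in Stab(q); its blocks are invertible.  Conversely every such invertible
   block-monomial matrix respects the relations, hence defines an automorphism,
   and composition multiplies blocks with the twist of the semidirect product.
   Finally Stab(q) is the stabiliser of a function on pairs of blocks, so it
   contains every group with the same diagonal orbits on [r]^2. *)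

Lemma big_tuple1 (R : nmodType) (I : finType) (F : 1.-tuple I -> R) :
  \sum_(t : 1.-tuple I) F t = \sum_(i : I) F [tuple i].
Proof.
rewrite (reindex (fun i : I => [tuple i])) //.
exists (fun t => tnth t ord0) => [i _ //|t _].
by apply: eq_from_tnth => i; rewrite (ord1 i).
Qed.

Lemma sumr_neq0P (R : nmodType) (I : finType) (F : I -> R) :
  \sum_i F i != 0 -> exists i, F i != 0.
Proof.
move=> nz; case: (pickP (fun i => F i != 0)) => [i ? | all0]; first by exists i.
by move: nz; rewrite big1 ?eqxx // => i _; apply/eqP/negbFE/all0.
Qed.

Lemma map_const_in (T U : eqType) (F : T -> U) (s : seq T) (K : U) :
  {in s, forall x, F x = K} -> map F s = nseq (size s) K.
Proof.
by move=> h; rewrite -(size_map F); apply/all_pred1P/allP => _ /mapP [x xs ->]; rewrite /= h.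
Qed.

Lemma nseq2_inj (T : Type) m p m' p' (K K' : T) : (0 < m)%N -> (0 < p)%N ->
  nseq m (nseq p K) = nseq m' (nseq p' K') -> K = K'.
Proof.
case: m => // m _; case: p => // p _; case: m' => [|m'] //=; case: p' => [|p'] //=.
by case.
Qed.

Section AlgHom.
Variables (k : fieldType) (A B : algType k).
Implicit Types f : A -> B.

Lemma alg_hom0 f : alg_hom f -> f 0 = 0.
Proof.
by case=> lin _; have := lin (-1) 0 0; rewrite scaler0 addr0 scaleN1r addNr.
Qed.

Lemma alg_homD f : alg_hom f -> {morph f : x y / x + y}.
Proof. by move=> [lin _] x y; have := lin 1 x y; rewrite !scale1r. Qed.

Lemma alg_homZ f : alg_hom f -> forall a, {morph f : x / a *: x}.
Proof.
by move=> hf a x; case: (hf) => lin _; have := lin a x 0; rewrite !addr0 (alg_hom0 hf) addr0.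
Qed.

Lemma alg_homM f : alg_hom f -> {morph f : x y / x * y}.
Proof. by case=> _ []. Qed.

Lemma alg_hom1 f : alg_hom f -> f 1 = 1.
Proof. by case=> _ []. Qed.

Lemma alg_hom_prod f (I : Type) (s : seq I) (P : pred I) (F : I -> A) :
  alg_hom f -> f (\prod_(i <- s | P i) F i) = \prod_(i <- s | P i) f (F i).
Proof. by move=> hf; apply: big_morph; [exact: alg_homM | exact: alg_hom1]. Qed.

Lemma alg_hom_lincomb f (I : Type) (s : seq I) (P : pred I) (c : I -> k) (F : I -> A) :
  alg_hom f -> f (\sum_(i <- s | P i) c i *: F i) = \sum_(i <- s | P i) c i *: f (F i).
Proof.
move=> hf; rewrite (big_morph f (alg_homD hf) (alg_hom0 hf)).
by apply: eq_bigr => i _; rewrite alg_homZ.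
Qed.

Lemma alg_hom_id : alg_hom (@id A).
Proof. by []. Qed.

Lemma alg_hom_can f (g : B -> A) : alg_hom f -> cancel f g -> cancel g f -> alg_hom g.
Proof.
move=> hf fK gK; split; last split.
- by move=> a x y; apply: (can_inj fK); rewrite gK (alg_homD hf) (alg_homZ hf) !gK.
- by move=> x y; apply: (can_inj fK); rewrite gK (alg_homM hf) !gK.
- by apply: (can_inj fK); rewrite gK (alg_hom1 hf).
Qed.

End AlgHom.

Lemma alg_hom_comp (k : fieldType) (A B C : algType k) (g : B -> C) (f : A -> B) :
  alg_hom g -> alg_hom f -> alg_hom (g \o f).
Proof.
move=> hg hf; split; last split.
- by move=> a x y /=; rewrite (alg_homD hf) (alg_homZ hf) (alg_homD hg) (alg_homZ hg).
- by move=> x y /=; rewrite (alg_homM hf) (alg_homM hg).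
- by rewrite /= (alg_hom1 hf) (alg_hom1 hg).
Qed.

Section TestMatrices.
Variable k : fieldType.

Definition nil3 : 'M[k]_3 := \matrix_(i, j) ((i : nat) == j.+1)%:R.

(* [qplaneX] and [qplaneY c] square to zero and satisfy [Y X = c X Y]: they
   realise the quantum plane in degrees at most two. *)
Definition qplaneX : 'M[k]_4 := \matrix_(i, j)
  ((((i : nat) == 1%N) && ((j : nat) == 0%N)) || (((i : nat) == 3%N) && ((j : nat) == 2%N)))%:R.

Definition qplaneY (c : k) : 'M[k]_4 := \matrix_(i, j)
  (if ((i : nat) == 2%N) && ((j : nat) == 0%N) then 1 else
   if ((i : nat) == 3%N) && ((j : nat) == 1%N) then c else 0).

Lemma nil3_mulE (a b : k) : ((a *: nil3) * (b *: nil3)) ord_max ord0 = a * b.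
Proof.
rewrite -scalerAl -scalerAr !mxE !big_ord_recl !big_ord0 !mxE /=.
by rewrite !(mul0r, mulr0, mul1r, addr0, add0r, mulr1).
Qed.

Lemma qplane_mulE (a b c d e : k) :
  ((a *: qplaneX + b *: qplaneY e) * (c *: qplaneX + d *: qplaneY e)) ord_max ord0
  = a * d + b * c * e.
Proof.
rewrite !mxE !big_ord_recl !big_ord0 !mxE /=.
rewrite !(mul0r, mulr0, mul1r, addr0, add0r, mulr1).
ring.
Qed.

Lemma qplaneYX c : qplaneY c * qplaneX = c *: (qplaneX * qplaneY c).
Proof.
apply/matrixP => i j; rewrite !mxE !big_ord_recl !big_ord0 !mxE /=.
case: i => [[|[|[|[|?]]]] ?] //=; case: j => [[|[|[|[|?]]]] ?] //=;
by rewrite !(mul0r, mulr0, mul1r, addr0, add0r, mulr1).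
Qed.

End TestMatrices.

Section PairStabilizer.
Variables (r : nat) (T : eqType) (F : 'I_r -> 'I_r -> T).

Definition pair_stab : {set {perm 'I_r}} :=
  [set s : {perm 'I_r} | [forall b, forall c, F (s b) (s c) == F b c]].

Lemma pair_stabP (s : {perm 'I_r}) : reflect (forall b c, F (s b) (s c) = F b c) (s \in pair_stab).
Proof.
rewrite inE; apply: (iffP forallP) => [h b c | h b].
  exact/eqP/(forallP (h b)).
by apply/forallP => c; apply/eqP.
Qed.

Lemma pair_stab_group : group_set pair_stab.
Proof.
apply/group_setP; split; first by apply/pair_stabP => b c; rewrite !perm1.
by move=> s t /pair_stabP hs /pair_stabP ht; apply/pair_stabP => b c; rewrite !permM ht hs.
Qed.

(* Two points in one diagonal orbit of [H] lie in one orbit of [pair_stab],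
   on which [F] is constant. *)
Lemma pair_stab_max (H : {group {perm 'I_r}}) :
  diag_orbit_partition H = diag_orbit_partition pair_stab -> H \subset pair_stab.
Proof.
move=> eqHG; apply/subsetP => h hH; apply/pair_stabP => b c.
have : diagorb H (b, c) \in diag_orbit_partition pair_stab by rewrite -eqHG; apply: imset_f.
case/imsetP => x _ orbit_bc.
have /imsetP [g /pair_stabP hg [eb ec]] : (b, c) \in diagorb pair_stab x.
  by rewrite -orbit_bc; apply/imsetP; exists 1%g; rewrite ?group1 ?perm1.
have /imsetP [g' /pair_stabP hg' [ehb ehc]] : (h b, h c) \in diagorb pair_stab x.
  by rewrite -orbit_bc; apply/imsetP; exists h.
by rewrite ehb ehc hg' eb ec hg.
Qed.

End PairStabilizer.

Lemma mulmx1_support (k : fieldType) n (M N : 'M[k]_n) : M *m N = 1%:M ->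
  forall a, exists i, (M a i != 0) && (N i a != 0).
Proof.
move=> MN a; have /matrixP/(_ a a) := MN; rewrite !mxE eqxx => e.
have [i] : exists i, M a i * N i a != 0 by apply: sumr_neq0P; rewrite e oner_eq0.
by rewrite mulf_eq0 negb_or => hi; exists i.
Qed.

Lemma unitmx_row_neq0 (k : fieldType) n (M : 'M[k]_n) :
  M \in unitmx -> forall a, exists i, M a i != 0.
Proof. by move=> u a; have [i /andP [h _]] := mulmx1_support (mulmxV u) a; exists i. Qed.

Section NatEntry.
Variable R : nzRingType.

(* Entries indexed by [nat], [0] out of range: this compares matrices whose
   sizes are equal but not convertible. *)
Definition nat_entry m (B : 'M[R]_m) (x y : nat) : R :=
  if insub x is Some x' then if insub y is Some y' then B x' y' else 0 else 0.

Lemma nat_entry_ord m (B : 'M[R]_m) (x y : 'I_m) : nat_entry B x y = B x y.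
Proof. by rewrite /nat_entry !valK. Qed.

Lemma nat_entry_out m (B : 'M[R]_m) (x y : nat) :
  ~~ (x < m)%N || ~~ (y < m)%N -> nat_entry B x y = 0.
Proof.
rewrite /nat_entry => h; case: insubP => [x' hx' _|//]; case: insubP => [y' hy' _|//].
by rewrite hx' hy' in h.
Qed.

Lemma nat_entry_mul m m' : m' = m -> forall (B C : 'M[R]_m) x y,
  \sum_(z < m') nat_entry B x z * nat_entry C z y = nat_entry (B *m C) x y.
Proof.
move=> -> B C x y.
have [hx|hx] := ltnP x m; last first.
  rewrite [RHS]nat_entry_out -?leqNgt ?hx // big1 // => z _.
  by rewrite nat_entry_out ?mul0r // -leqNgt hx.
have [hy|hy] := ltnP y m; last first.
  rewrite [RHS]nat_entry_out; last by rewrite -[~~ (y < m)%N]leqNgt hy orbT.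
  rewrite big1 // => z _.
  by rewrite [nat_entry C _ _]nat_entry_out ?mulr0 // -[~~ (y < m)%N]leqNgt hy orbT.
rewrite -[x]/(val (Ordinal hx)) -[y]/(val (Ordinal hy)) nat_entry_ord mxE.
by apply: eq_bigr => z _; rewrite !nat_entry_ord.
Qed.

Lemma nat_entry1 m x y : (x < m)%N -> (y < m)%N ->
  nat_entry (1%:M : 'M[R]_m) x y = (x == y)%:R.
Proof.
by move=> hx hy; rewrite -[x]/(val (Ordinal hx)) -[y]/(val (Ordinal hy)) nat_entry_ord mxE.
Qed.

End NatEntry.

Lemma mxtransp_nat_entry (k : fieldType) m m' (B : 'M[k]_m) (x y : 'I_m') :
  m = m' -> mxtransp m' B x y = nat_entry B x y.
Proof.
move=> e; subst m'; rewrite /mxtransp; case: eqP => // e'.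
by rewrite castmxE -[x in RHS]cast_ord_id -[y in RHS]cast_ord_id -nat_entry_ord.
Qed.

Section BlockMatrices.
Variables (k : fieldType) (n r : nat) (beta : 'I_n -> 'I_r).

Definition block_size c := #|block beta c|.
Definition block_enum c := enum (block beta c).
Definition block_index a : nat := index a (block_enum (beta a)).

Lemma mem_block i c : (i \in block beta c) = (beta i == c).
Proof. by rewrite inE. Qed.

Lemma size_block_enum c : size (block_enum c) = block_size c.
Proof. by rewrite /block_enum /block_size cardE. Qed.

Lemma block_index_lt a : (block_index a < block_size (beta a))%N.
Proof. by rewrite /block_index -size_block_enum index_mem mem_enum mem_block. Qed.

Lemma nth_block_index x0 a : nth x0 (block_enum (beta a)) (block_index a) = a.
Proof. by rewrite /block_index nth_index // mem_enum mem_block. Qed.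

Lemma block_nth x0 c y : (y < block_size c)%N -> beta (nth x0 (block_enum c) y) = c.
Proof.
by move=> hy; apply/eqP; rewrite -mem_block -mem_enum mem_nth // size_block_enum.
Qed.

Lemma block_index_nth x0 c y : (y < block_size c)%N ->
  block_index (nth x0 (block_enum c) y) = y.
Proof.
move=> hy; rewrite /block_index block_nth //.
by rewrite index_uniq ?size_block_enum ?enum_uniq.
Qed.

Lemma block_index_inj a b : beta a = beta b -> block_index a = block_index b -> a = b.
Proof. by move=> hb hi; rewrite -(nth_block_index a a) -(nth_block_index a b) hi hb. Qed.

Lemma sum_block x0 c (G : 'I_n -> k) :
  \sum_(b | beta b == c) G b = \sum_(z < block_size c) G (nth x0 (block_enum c) z).
Proof.
transitivity (\sum_(b <- block_enum c) G b).
  by rewrite big_enum; apply: eq_bigl => b; rewrite mem_block.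
by rewrite (big_nth x0) size_block_enum big_mkord.
Qed.

Definition block_monomial (M : 'M[k]_n) (s : 'I_r -> 'I_r) :=
  forall a i, M a i != 0 -> beta i = s (beta a).

Lemma block_monomial_mul M N (s t : {perm 'I_r}) :
  block_monomial M s -> block_monomial N t -> block_monomial (M *m N) (s * t)%g.
Proof.
move=> hM hN a i; rewrite mxE => /sumr_neq0P [b]; rewrite mulf_eq0 negb_or => /andP [h1 h2].
by rewrite permM (hN _ _ h2) (hM _ _ h1).
Qed.

Lemma block_monomial_size_le M N (s : {perm 'I_r}) c :
  block_monomial M s -> N *m M = 1%:M -> (block_size (s c) <= block_size c)%N.
Proof.
move=> hM NM; rewrite /block_size.
pose P := \matrix_(x < #|block beta c|, y < #|block beta (s c)|) M (enum_val x) (enum_val y).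
pose Q := \matrix_(y < #|block beta (s c)|, x < #|block beta c|) N (enum_val y) (enum_val x).
have QP : Q *m P = 1%:M.
  apply/matrixP => y y'; rewrite !mxE; under eq_bigr do rewrite !mxE.
  rewrite -(big_enum_val (A := [in block beta c]) (fun a => N (enum_val y) a * M a (enum_val y'))).
  have /matrixP/(_ (enum_val y) (enum_val y')) := NM.
  rewrite !mxE (inj_eq enum_val_inj) => <-.
  rewrite [RHS](bigID (mem (block beta c))) /= [X in _ = _ + X]big1 ?addr0 // => a ha.
  apply/eqP; rewrite mulf_eq0; apply/orP; right; apply/negPn/negP => nz.
  move: (hM _ _ nz); have := enum_valP y'; rewrite mem_block => /eqP -> /perm_inj e.
  by move: ha; rewrite mem_block e eqxx.
have := mxrankM_maxr Q P; rewrite QP mxrank1 => h.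
exact: leq_trans h (rank_leq_row P).
Qed.

Definition blockmx (E : 'I_r -> nat -> nat -> k) (s : 'I_r -> 'I_r) : 'M[k]_n :=
  \matrix_(a, i)
    if beta i == s (beta a) then E (beta a) (block_index a) (block_index i) else 0.

Lemma blockmx_block_monomial E s : block_monomial (blockmx E s) s.
Proof. by move=> a i; rewrite mxE; case: (beta i =P s (beta a)) => // _; rewrite eqxx. Qed.

Lemma blockmx_mul E E' (s t : {perm 'I_r}) :
  blockmx E s *m blockmx E' t =
  blockmx (fun c x y => \sum_(z < block_size (s c)) E c x z * E' (s c) z y) (s * t)%g.
Proof.
apply/matrixP => a i'; rewrite !mxE permM; under eq_bigr do rewrite !mxE.
rewrite (bigID (fun i => beta i == s (beta a))) /= [X in _ + X]big1 ?addr0; last first.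
  by move=> i /negbTE ->; rewrite mul0r.
case: (beta i' =P t (s (beta a))) => [e|ne].
  rewrite (sum_block a); apply: eq_bigr => z _; have hz := ltn_ord z.
  by rewrite block_nth // eqxx -e eqxx block_index_nth.
by rewrite big1 // => i /eqP ->; case: (beta i' =P t (s (beta a))) => // e; rewrite mulr0.
Qed.

Lemma eq_blockmx E E' (s : 'I_r -> 'I_r) :
  (forall c x y, (x < block_size c)%N -> (y < block_size (s c))%N -> E c x y = E' c x y) ->
  blockmx E s = blockmx E' s.
Proof.
move=> h; apply/matrixP => a i; rewrite !mxE; case: eqP => // e.
by apply: h; rewrite ?block_index_lt // -e block_index_lt.
Qed.

Lemma blockmx1 : blockmx (fun c x y => (x == y)%:R) (1%g : {perm 'I_r}) = 1%:M.
Proof.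
apply/matrixP => a i; rewrite !mxE perm1; case: eqP => e.
  have [->|ne] := eqVneq a i; first by rewrite !eqxx.
  by rewrite (introF eqP) //; apply: contra_not (elimN eqP ne); exact: block_index_inj.
by have [ai|//] := eqVneq a i; case: e; rewrite ai.
Qed.

Definition block_val c (x : 'I_(block_size c)) : 'I_n := enum_val (A := [in block beta c]) x.

Definition mx_block (M : 'M[k]_n) (s : 'I_r -> 'I_r) c : 'M[k]_(block_size c) :=
  \matrix_(x, y) M (block_val x) (nth (block_val x) (block_enum (s c)) y).

Lemma mx_blockE M s c (x y : 'I_(block_size c)) x0 : block_size (s c) = block_size c ->
  mx_block M s c x y = M (nth x0 (block_enum c) x) (nth x0 (block_enum (s c)) y).
Proof.
move=> hs; rewrite mxE (set_nth_default x0) ?size_block_enum ?hs ?ltn_ord //.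
by rewrite /block_val (enum_val_nth x0).
Qed.

Lemma mx_block_blockmx E s c (x y : 'I_(block_size c)) : block_size (s c) = block_size c ->
  mx_block (blockmx E s) s c x y = E c x y.
Proof.
move=> hs; rewrite (mx_blockE _ _ _ (block_val x)) // mxE.
have hx := ltn_ord x; have hy : (y < block_size (s c))%N by rewrite hs.
by rewrite !block_nth // eqxx !block_index_nth.
Qed.

Lemma block_monomial_blockmx M s : block_monomial M s ->
  (forall c, block_size (s c) = block_size c) ->
  M = blockmx (fun c => nat_entry (mx_block M s c)) s.
Proof.
move=> hb hs; apply/matrixP => a i; rewrite mxE.
have [e|ne] := eqVneq (beta i) (s (beta a)); last first.
  by apply/eqP; apply: contraT => nz; rewrite (hb _ _ nz) eqxx in ne.
have ha := block_index_lt a.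
have hi : (block_index i < block_size (beta a))%N by rewrite -hs -e block_index_lt.
rewrite -[block_index a]/(val (Ordinal ha)) -[block_index i]/(val (Ordinal hi)).
by rewrite nat_entry_ord (mx_blockE _ _ _ a) //= nth_block_index -e nth_block_index.
Qed.

Lemma mx_block_mul M N (s t : {perm 'I_r}) c :
  block_monomial M s -> block_monomial N t ->
  (forall c, block_size (s c) = block_size c) -> (forall c, block_size (t c) = block_size c) ->
  mx_block (M *m N) (s * t)%g c
  = mx_block M s c *m mxtransp (block_size c) (mx_block N t (s c)).
Proof.
move=> hM hN hs ht.
have hst d : block_size ((s * t)%g d) = block_size d by rewrite permM ht hs.
rewrite {1}(block_monomial_blockmx hM hs) {1}(block_monomial_blockmx hN ht) blockmx_mul.
apply/matrixP => x y; rewrite mx_block_blockmx // mxE.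
rewrite (congr1 (fun m => \sum_(z < m) nat_entry (mx_block M s c) x z
                                  * nat_entry (mx_block N t (s c)) z y) (hs c)) /=.
apply: eq_bigr => z _; rewrite -nat_entry_ord; congr (_ * _).
by rewrite mxtransp_nat_entry.
Qed.

Lemma mx_block1 c : mx_block 1%:M (1%g : {perm 'I_r}) c = 1%:M.
Proof.
apply/matrixP => x y; rewrite (mx_blockE _ _ _ (block_val x)) ?perm1 // !mxE.
by rewrite nth_uniq ?size_block_enum // enum_uniq.
Qed.

Hypothesis beta_surj : forall c, exists a, beta a = c.

Definition block_fun (M : 'M[k]_n) (c : 'I_r) : 'I_r :=
  if [pick p : 'I_n * 'I_n | (beta p.1 == c) && (M p.1 p.2 != 0)] is Some p
  then beta p.2 else c.

Definition block_perm (M : 'M[k]_n) : {perm 'I_r} :=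
  if injectiveP (block_fun M) is ReflectT inj then perm inj else 1%g.

Lemma block_permE M : injective (block_fun M) -> block_perm M =1 block_fun M.
Proof. by rewrite /block_perm => inj; case: injectiveP => [inj'|//]; exact: permE. Qed.

Lemma block_perm_spec M (s : {perm 'I_r}) : block_monomial M s ->
  (forall a, exists i, M a i != 0) -> block_perm M = s.
Proof.
move=> hb hr.
have fs : block_fun M =1 s.
  move=> c; have [a ha] := beta_surj c; have [i hi] := hr a.
  rewrite /block_fun; case: pickP => [p /andP [/eqP h1 h2]|none].
    by rewrite (hb _ _ h2) h1.
  by have := none (a, i); rewrite /= ha eqxx hi.
have inj : injective (block_fun M) by apply: (eq_inj perm_inj) => x; rewrite fs.
by apply/permP => c; rewrite block_permE // fs.
Qed.

Lemma block_perm1 : block_perm 1%:M = 1%g.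
Proof.
apply: block_perm_spec => [a i|a].
  by rewrite mxE perm1; have [->|_] := eqVneq a i; rewrite ?mulr0n ?eqxx.
by exists a; rewrite mxE eqxx oner_eq0.
Qed.

End BlockMatrices.

Lemma Stab_pair_stab (k : fieldType) n r (q : 'M[k]_n) (beta : 'I_n -> 'I_r) :
  Stab q beta = pair_stab (fun b c =>
    (block_size beta b, Defs.subq q (block beta b) (block beta c))).
Proof.
apply/setP => s; rewrite [in RHS]inE !inE.
apply/andP/forallP => [[/forallP hn /forallP hq] b | h].
  apply/forallP => c; rewrite xpair_eqE /block_size (eqP (hn b)) eqxx eq_sym.
  exact: (forallP (hq b)).
split; apply/forallP => b; first by have /forallP/(_ b)/andP [] := h b.
by apply/forallP => c; have /forallP/(_ c)/andP [_] := h b; rewrite eq_sym.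
Qed.

Lemma Stab_group (k : fieldType) n r (q : 'M[k]_n) (beta : 'I_n -> 'I_r) :
  group_set (Stab q beta).
Proof. by rewrite Stab_pair_stab; exact: pair_stab_group. Qed.

Section QParam.
Variables (k : fieldType) (n : nat) (q : 'M[k]_n).
Hypothesis qP : qparam q.

Lemma q_diag i : q i i = 1.
Proof. by case: qP. Qed.

Lemma q_mul_tr i j : q i j * q j i = 1.
Proof. by case: qP. Qed.

Lemma q_neq0 i j : q i j != 0.
Proof.
by apply/eqP => q0; have /eqP := q_mul_tr i j; rewrite q0 mul0r eq_sym oner_eq0.
Qed.

Lemma q_tr i j : q i j = (q j i)^-1.
Proof. by apply: (mulIf (q_neq0 j i)); rewrite q_mul_tr mulVf ?q_neq0. Qed.

Section Blocks.
Variables (r : nat) (beta : 'I_n -> 'I_r).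
Hypothesis beta_surj : forall c, exists a, beta a = c.
Hypothesis beta_rows : forall i j, (beta i == beta j) = (row i q == row j q).

Lemma q_row_block i j x : beta i = beta j -> q i x = q j x.
Proof.
move=> h; have := beta_rows i j; rewrite h eqxx => /esym/eqP/matrixP/(_ 0 x).
by rewrite !mxE.
Qed.

Lemma q_col_block i j x : beta i = beta j -> q x i = q x j.
Proof. by move=> h; rewrite q_tr (q_tr x j) (q_row_block _ h). Qed.

Lemma q_block x x' y y' : beta x = beta x' -> beta y = beta y' -> q x y = q x' y'.
Proof. by move=> hx hy; rewrite (q_row_block _ hx) (q_col_block _ hy). Qed.

Lemma block_of_col a a' : (forall e, q e a = q e a') -> beta a = beta a'.
Proof.
move=> h; apply/eqP; rewrite beta_rows; apply/eqP/matrixP => i x.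
by rewrite !mxE q_tr h -q_tr.
Qed.

Lemma block_size_gt0 c : (0 < block_size beta c)%N.
Proof. by have [a ha] := beta_surj c; apply/card_gt0P; exists a; rewrite mem_block ha. Qed.

Lemma subq_block c d x y : beta x = c -> beta y = d ->
  Defs.subq q (block beta c) (block beta d)
  = nseq (block_size beta c) (nseq (block_size beta d) (q x y)).
Proof.
move=> hx hy; rewrite /Defs.subq /block_size [#|_|]cardE; apply: map_const_in => x'.
rewrite mem_enum mem_block => /eqP hx'; rewrite cardE; apply: map_const_in => y'.
by rewrite mem_enum mem_block => /eqP hy'; apply: q_block; rewrite ?hx ?hy ?hx' ?hy'.
Qed.

Lemma StabP (s : {perm 'I_r}) :
  s \in Stab q beta <->
  (forall c, block_size beta (s c) = block_size beta c) /\
  (forall x y x' y', beta x' = s (beta x) -> beta y' = s (beta y) -> q x y = q x' y').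
Proof.
rewrite Stab_pair_stab; split => [/pair_stabP hs | [hn hq]].
  split=> [c | x y x' y' hx hy]; first by have [] := hs c c.
  have [_] := hs (beta x) (beta y).
  rewrite (subq_block (erefl _) (erefl _)) (subq_block hx hy) => /esym.
  by apply: nseq2_inj; apply: block_size_gt0.
apply/pair_stabP => b c.
have [x hx] := beta_surj b; have [y hy] := beta_surj c.
have [x' hx'] := beta_surj (s b); have [y' hy'] := beta_surj (s c).
by rewrite (subq_block hx hy) (subq_block hx' hy') !hn (hq x y x' y') ?hx ?hy.
Qed.

Lemma Stab_block_size s : s \in Stab q beta ->
  forall c, block_size beta (s c) = block_size beta c.
Proof. by case/StabP. Qed.

Section Algebra.
Variables (A : algType k) (v : 'I_n -> A).
Hypothesis SqP : is_Sq q v.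

Lemma Sq_lift (B : algType k) (b : 'I_n -> B) :
  q_relations q b -> exists f : A -> B, alg_hom f /\ forall i, f (v i) = b i.
Proof. by move=> rel; case: (SqP.2 B b rel). Qed.

Lemma Sq_ext (B : algType k) (f1 f2 : A -> B) : alg_hom f1 -> alg_hom f2 ->
  (forall i, f1 (v i) = f2 (v i)) -> f1 =1 f2.
Proof.
move=> h1 h2; apply: (SqP.2 B (f1 \o v) _).2 => // i j /=.
by rewrite -!(alg_homM h1) SqP.1 alg_homZ.
Qed.

(* [v b] goes to the matrix unit [E_(b+1, 0)]; all products of two such vanish. *)
Lemma exists_coord : exists coord : 'I_n -> A -> k,
  forall (c : 'I_n -> k) b, coord b (\sum_a c a *: v a) = c b.
Proof.
pose E b : 'M[k]_n.+1 := delta_mx (lift ord0 b) ord0.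
have rel : q_relations q E.
  by move=> i j; rewrite -!mulmxE !mul_delta_mx_cond !(negbTE (neq_lift _ _)) mulr0n scaler0.
have [P [hP hPv]] := Sq_lift rel.
exists (fun b z => P z (lift ord0 b) ord0) => c b /=.
rewrite alg_hom_lincomb // summxE (bigD1 b) //= big1 => [|a nab].
  by rewrite hPv !mxE !eqxx mulr1 addr0.
by rewrite hPv !mxE (inj_eq lift_inj) eq_sym (negbTE nab) mulr0.
Qed.

Lemma nil3_rep e : exists P : A -> 'M[k]_3, alg_hom P /\
  forall c : 'I_n -> k, P (\sum_b c b *: v b) = c e *: nil3 k.
Proof.
have rel : q_relations q (fun b => if b == e then nil3 k else 0).
  move=> i j; case: eqP => [->|_]; case: eqP => [->|_];
  by rewrite ?q_diag ?scale1r ?mulr0 ?mul0r ?scaler0.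
have [P [hP hPv]] := Sq_lift rel; exists P; split => // c.
rewrite alg_hom_lincomb //; under eq_bigr do rewrite hPv.
by rewrite (bigD1 e) //= eqxx big1 ?addr0 // => b /negbTE ->; rewrite scaler0.
Qed.

Lemma qplane_rep e a : e != a -> exists P : A -> 'M[k]_4, alg_hom P /\
  forall c : 'I_n -> k,
    P (\sum_b c b *: v b) = c e *: qplaneX k + c a *: qplaneY (q e a).
Proof.
move=> nea.
pose img b := if b == e then qplaneX k else if b == a then qplaneY (q e a) else 0.
have rel : q_relations q img.
  move=> i j; rewrite /img.
  case: (i =P e) => [->|ie]; case: (j =P e) => [->|je].
  - by rewrite q_diag scale1r.
  - case: (j =P a) => [->|ja]; last by rewrite mul0r mulr0 scaler0.
    exact: qplaneYX.
  - case: (i =P a) => [->|ia]; last by rewrite mul0r mulr0 scaler0.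
    by rewrite qplaneYX scalerA [q a e * _]mulrC q_mul_tr scale1r.
  - case: (i =P a) => [->|ia]; case: (j =P a) => [->|ja];
    by rewrite ?q_diag ?scale1r ?mulr0 ?mul0r ?scaler0.
have [P [hP hPv]] := Sq_lift rel; exists P; split => // c.
rewrite alg_hom_lincomb //; under eq_bigr do rewrite hPv.
rewrite (bigD1 e) //= (bigD1 a) 1?eq_sym //= /img eqxx [a == e]eq_sym (negbTE nea) eqxx addrA.
by rewrite big1 ?addr0 // => b /andP [/negbTE -> /negbTE ->]; rewrite scaler0.
Qed.

Lemma homog1P z : homog v 1 z <-> exists c : 'I_n -> k, z = \sum_a c a *: v a.
Proof.
split => [[c ->]|[c ->]].
  by exists (fun a => c [tuple a]); rewrite big_tuple1; apply: eq_bigr => a _; rewrite big_ord1.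
by exists (fun t => c (tnth t ord0)); rewrite big_tuple1; apply: eq_bigr => a _; rewrite big_ord1.
Qed.

Definition acts_by_mx (f : A -> A) (M : 'M[k]_n) :=
  forall i, f (v i) = \sum_a M a i *: v a.

Lemma lincomb_gens1 i : v i = \sum_a (1%:M : 'M[k]_n) a i *: v a.
Proof.
rewrite (bigD1 i) //= mxE eqxx scale1r big1 ?addr0 // => a /negbTE ai.
by rewrite mxE ai scale0r.
Qed.

Lemma acts_by_mx_lincomb f M (c : 'I_n -> k) : alg_hom f -> acts_by_mx f M ->
  f (\sum_i c i *: v i) = \sum_a (\sum_i M a i * c i) *: v a.
Proof.
move=> hf hM; rewrite alg_hom_lincomb //.
under eq_bigr do rewrite hM scaler_sumr.
rewrite exchange_big /=; apply: eq_bigr => a _; rewrite scaler_suml.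
by apply: eq_bigr => i _; rewrite scalerA mulrC.
Qed.

Lemma acts_by_mx_comp f g M N : alg_hom f -> acts_by_mx f M -> acts_by_mx g N ->
  acts_by_mx (f \o g) (M *m N).
Proof.
move=> hf hM hN i /=; rewrite hN (acts_by_mx_lincomb _ hf hM).
by apply: eq_bigr => a _; rewrite mxE.
Qed.

Lemma acts_by_mx_homog f M d z : alg_hom f -> acts_by_mx f M ->
  homog v d z -> homog v d (f z).
Proof.
move=> hf hM [c ->]; rewrite alg_hom_lincomb //.
have fprod t : f (\prod_(i < d) v (tnth t i)) =
    \sum_(g : {ffun 'I_d -> 'I_n}) (\prod_(i < d) M (g i) (tnth t i)) *: \prod_(i < d) v (g i).
  rewrite alg_hom_prod // (eq_bigr _ (fun i _ => hM _)) bigA_distr_bigA /=.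
  by apply: eq_bigr => g _; rewrite scaler_prod.
under eq_bigr do rewrite fprod scaler_sumr.
rewrite exchange_big /=.
exists (fun t' => \sum_(t : d.-tuple 'I_n) c t * \prod_(i < d) M (tnth t' i) (tnth t i)).
rewrite (reindex (fun t' : d.-tuple 'I_n => [ffun i => tnth t' i])) /=; last first.
  exists (fun g : {ffun 'I_d -> 'I_n} => [tuple g i | i < d]) => [t _|g _].
    by apply: eq_from_tnth => i; rewrite tnth_mktuple ffunE.
  by apply/ffunP => i; rewrite ffunE tnth_mktuple.
apply: eq_bigr => t' _; rewrite scaler_suml; apply: eq_bigr => t _.
rewrite scalerA; congr (_ *: _); last by apply: eq_bigr => i _; rewrite ffunE.
by congr (_ * _); apply: eq_bigr => i _; rewrite ffunE.
Qed.

Section Coordinates.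
Variable coord : 'I_n -> A -> k.
Hypothesis coordE : forall (c : 'I_n -> k) b, coord b (\sum_a c a *: v a) = c b.

Lemma lincomb_gens_inj (c d : 'I_n -> k) :
  \sum_a c a *: v a = \sum_a d a *: v a -> c =1 d.
Proof. by move=> h b; rewrite -(coordE c) h coordE. Qed.

Definition mat (f : A -> A) : 'M[k]_n := \matrix_(a, i) coord a (f (v i)).

Lemma mat_acts f : gr_aut v f -> acts_by_mx f (mat f).
Proof.
move=> [_ [_ hom]] i; have /homog1P [c fvi] : homog v 1 (f (v i)).
  by apply/hom/homog1P; exists (1%:M^~ i); rewrite -lincomb_gens1.
by rewrite fvi; apply: eq_bigr => a _; rewrite mxE fvi coordE.
Qed.

Lemma acts_by_mx_mat f M : acts_by_mx f M -> mat f = M.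
Proof. by move=> hM; apply/matrixP => a i; rewrite mxE hM coordE. Qed.

Lemma mat_unit f : gr_aut v f -> mat f \in unitmx.
Proof.
move=> hfa; have [hf [[g fK _] _]] := hfa.
rewrite -unitmx_tr -row_free_unit; apply: inj_row_free => z hz.
have f0 : f (\sum_i z 0 i *: v i) = f 0.
  rewrite (acts_by_mx_lincomb _ hf (mat_acts hfa)) (alg_hom0 hf).
  rewrite big1 // => a _; have /matrixP/(_ 0 a) := hz.
  rewrite !mxE => e; suff -> : \sum_i mat f a i * z 0 i = 0 by rewrite scale0r.
  by rewrite -[RHS]e; apply: eq_bigr => i _; rewrite mulrC [(mat f)^T _ _]mxE.
apply/rowP => i; rewrite mxE.
apply: (@lincomb_gens_inj (z 0) (fun _ => 0)).
by rewrite (can_inj fK f0) big1 // => a _; rewrite scale0r.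
Qed.

Lemma gr_aut_inv f : gr_aut v f -> exists g,
  [/\ gr_aut v g, cancel f g, cancel g f & mat g = invmx (mat f)].
Proof.
move=> hfa; have [hf [[g fK gK] _]] := hfa.
have gM : acts_by_mx g (invmx (mat f)).
  move=> i; apply: (can_inj fK).
  rewrite gK (acts_by_mx_lincomb _ hf (mat_acts hfa)) [LHS]lincomb_gens1.
  by apply: eq_bigr => a _; rewrite -(mulmxV (mat_unit hfa)) [in LHS]mxE.
exists g; split => //; last exact: acts_by_mx_mat.
have hg := alg_hom_can hf fK gK.
split => //; split; first by exists f.
by move=> d z; apply: acts_by_mx_homog gM.
Qed.

Lemma mat_comp f g : gr_aut v f -> gr_aut v g -> mat (f \o g) = mat f *m mat g.
Proof.
by move=> hf hg; apply/acts_by_mx_mat/acts_by_mx_comp; [exact: hf.1 | exact: mat_acts ..].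
Qed.

Lemma gr_aut_ext f g : gr_aut v f -> gr_aut v g -> mat f = mat g -> f =1 g.
Proof.
by move=> hf hg e; apply: (Sq_ext hf.1 hg.1) => i; rewrite (mat_acts hf) (mat_acts hg) e.
Qed.

Lemma gr_aut_of_mx M N : M *m N = 1%:M -> N *m M = 1%:M ->
  q_relations q (fun i => \sum_a M a i *: v a) ->
  q_relations q (fun i => \sum_a N a i *: v a) ->
  exists2 f, gr_aut v f & mat f = M.
Proof.
move=> MN NM relM relN.
have [f [hf fM]] := Sq_lift relM; have [g [hg gN]] := Sq_lift relN.
have gK : cancel g f.
  apply: (Sq_ext (alg_hom_comp hf hg) (@alg_hom_id _ _)) => i.
  by rewrite (acts_by_mx_comp hf fM gN) MN -lincomb_gens1.
have fK : cancel f g.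
  apply: (Sq_ext (alg_hom_comp hg hf) (@alg_hom_id _ _)) => i.
  by rewrite (acts_by_mx_comp hg gN fM) NM -lincomb_gens1.
exists f; last exact: acts_by_mx_mat.
split => //; split; first by exists g.
by move=> d z; apply: acts_by_mx_homog hf fM.
Qed.

Lemma gr_aut_mul_gen f i e : gr_aut v f ->
  f (v i) * v e =
  (\sum_b (\sum_j mat f b j * (invmx (mat f) j e * q j i)) *: v b) * f (v i).
Proof.
move=> hfa; have [g [hg _ gK gM]] := gr_aut_inv hfa; have hf := hfa.1.
rewrite -{1}(gK (v e)) (mat_acts hg) gM -(alg_homM hf) mulr_sumr.
under eq_bigr do rewrite -scalerAr (SqP.1 _ i) scalerA scalerAl.
by rewrite -mulr_suml (alg_homM hf) (acts_by_mx_lincomb _ hf (mat_acts hfa)).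
Qed.

(* Compare the coefficients of [v_e v_a] on both sides of [gr_aut_mul_gen],
   read off in the test representations [nil3_rep] and [qplane_rep]. *)
Lemma mat_q_col f i e a : gr_aut v f -> mat f a i != 0 ->
  q e a = \sum_j mat f e j * (invmx (mat f) j e * q j i).
Proof.
move=> hfa nz; pose w b := \sum_j mat f b j * (invmx (mat f) j e * q j i).
have key : (\sum_b mat f b i *: v b) * (\sum_b 1%:M b e *: v b)
         = (\sum_b w b *: v b) * (\sum_b mat f b i *: v b).
  by rewrite -lincomb_gens1 -(mat_acts hfa i); exact: gr_aut_mul_gen.
have nil3_coef b : mat f b i * 1%:M b e = w b * mat f b i.
  have [P [hP Pc]] := nil3_rep b.
  by have := congr1 (fun z => P z ord_max ord0) key; rewrite /= !(alg_homM hP) !Pc !nil3_mulE.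
rewrite -/(w e); have [ae | nae] := eqVneq a e.
  rewrite ae in nz *; rewrite q_diag; apply: (mulIf nz); rewrite mul1r.
  by have := nil3_coef e; rewrite [1%:M _ _]mxE eqxx mulr1.
have wa0 : w a = 0.
  have := nil3_coef a; rewrite [1%:M _ _]mxE (negbTE nae) mulr0 => /esym/eqP.
  by rewrite mulf_eq0 (negbTE nz) orbF => /eqP.
have [P [hP Pc]] := qplane_rep (e := e) (a := a) (contra_neq esym nae).
have := congr1 (fun z => P z ord_max ord0) key; rewrite /= !(alg_homM hP) !Pc !qplane_mulE.
rewrite [1%:M e e]mxE [1%:M a e]mxE eqxx (negbTE nae) wa0 !mul0r mulr0 add0r addr0 mulr1 mulrC.
exact: (mulIf nz).
Qed.

Lemma mat_col_block f a a' i i' : gr_aut v f -> mat f a i != 0 -> mat f a' i' != 0 ->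
  beta i = beta i' -> beta a = beta a'.
Proof.
move=> hfa nz nz' hi; apply: block_of_col => e.
rewrite (mat_q_col e hfa nz) (mat_q_col e hfa nz'); apply: eq_bigr => j _.
by rewrite (q_col_block _ hi).
Qed.

Lemma mat_row_block f a a' i i' : gr_aut v f -> mat f a i != 0 -> mat f a' i' != 0 ->
  beta a = beta a' -> beta i = beta i'.
Proof.
move=> hfa nz nz' ha; have [g [hg _ _ gM]] := gr_aut_inv hfa.
have NM : mat g *m mat f = 1%:M by rewrite gM mulVmx // mat_unit.
have [b /andP [gib fbi]] := mulmx1_support NM i.
have [b' /andP [gib' fbi']] := mulmx1_support NM i'.
apply: (mat_col_block hg gib gib').
by rewrite -(mat_col_block hfa nz fbi (erefl _)) -(mat_col_block hfa nz' fbi' (erefl _)).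
Qed.

Lemma mat_support_q f a i e j : gr_aut v f -> mat f a i != 0 -> mat f e j != 0 ->
  q e a = q j i.
Proof.
move=> hfa nz nz'; rewrite (mat_q_col e hfa nz).
transitivity (\sum_l mat f e l * invmx (mat f) l e * q j i).
  apply: eq_bigr => l _; rewrite mulrA.
  have [->|nzl] := eqVneq (mat f e l) 0; first by rewrite !mul0r.
  by rewrite (q_row_block _ (mat_row_block hfa nzl nz' (erefl _))).
have /matrixP/(_ e e) := mulmxV (mat_unit hfa).
by rewrite -mulr_suml [(_ *m _) _ _]mxE [1%:M _ _]mxE eqxx => ->; rewrite mul1r.
Qed.

Lemma mat_block_monomial f : gr_aut v f ->
  block_monomial beta (mat f) (block_perm beta (mat f)).
Proof.
move=> hfa; have hr := unitmx_row_neq0 (mat_unit hfa).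
have hb a i : mat f a i != 0 -> beta i = block_fun beta (mat f) (beta a).
  move=> nz; rewrite /block_fun; case: pickP => [p /andP [/eqP h1 h2]|none].
    by apply: (mat_row_block hfa nz h2); rewrite h1.
  by have := none (a, i); rewrite /= eqxx nz.
have inj : injective (block_fun beta (mat f)).
  move=> c c'; have [a <-] := beta_surj c; have [i hi] := hr a.
  have [a' <-] := beta_surj c'; have [i' hi'] := hr a' => e.
  by apply: (mat_col_block hfa hi hi'); rewrite (hb _ _ hi) (hb _ _ hi') e.
by move=> a i nz; rewrite block_permE //; exact: hb.
Qed.

Lemma block_perm_mat_Stab f : gr_aut v f -> block_perm beta (mat f) \in Stab q beta.
Proof.
move=> hfa; have [g [hg _ _ gM]] := gr_aut_inv hfa.
have MN : mat f *m mat g = 1%:M by rewrite gM mulmxV // mat_unit.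
have NM : mat g *m mat f = 1%:M by rewrite gM mulVmx // mat_unit.
have hbf := mat_block_monomial hfa; have hbg := mat_block_monomial hg.
apply/StabP; split=> [c | x y x' y' hx hy].
  apply/eqP; rewrite eqn_leq (block_monomial_size_le _ hbf NM) /=.
  (* [block_perm (mat g)] undoes [block_perm (mat f)]. *)
  have [a ha] := beta_surj c; have [i /andP [fai gia]] := mulmx1_support MN a.
  have := hbg _ _ gia; rewrite (hbf _ _ fai) ha => e.
  by rewrite [in X in (X <= _)%N]e; apply: (block_monomial_size_le _ hbg MN).
have hr := unitmx_row_neq0 (mat_unit hfa).
have [j hj] := hr x; have [i hi] := hr y.
rewrite (mat_support_q hfa hi hj); apply: q_block.
  by rewrite (hbf _ _ hj) hx.
by rewrite (hbf _ _ hi) hy.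
Qed.

Lemma block_monomial_q_relations M (s : {perm 'I_r}) :
  block_monomial beta M s -> s \in Stab q beta ->
  q_relations q (fun i => \sum_a M a i *: v a).
Proof.
move=> hb /StabP [_ hq] i j /=.
rewrite mulr_suml [X in _ = _ *: X]mulr_suml scaler_sumr.
rewrite [RHS](eq_bigr (fun b => \sum_a q i j *: ((M b i *: v b) * (M a j *: v a)))); last first.
  by move=> b _; rewrite mulr_sumr scaler_sumr.
rewrite [RHS]exchange_big /=; apply: eq_bigr => a _; rewrite mulr_sumr; apply: eq_bigr => b _.
rewrite -!scalerAl -!scalerAr !scalerA (SqP.1 b a) scalerA.
have [->|nz1] := eqVneq (M a j) 0; first by rewrite !(mul0r, mulr0, scale0r, scaler0).
have [->|nz2] := eqVneq (M b i) 0; first by rewrite !(mul0r, mulr0, scale0r, scaler0).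
by rewrite (hq b a i j) ?(hb _ _ nz1) ?(hb _ _ nz2) //; congr (_ *: _); ring.
Qed.

Lemma gr_aut_of_blockmx (F : forall c, 'M[k]_(block_size beta c)) (s : {perm 'I_r}) :
  (forall c, F c \in unitmx) -> s \in Stab q beta ->
  exists2 f, gr_aut v f & mat f = blockmx beta (fun c => nat_entry (F c)) s.
Proof.
move=> hF hS.
have hSV : (s^-1)%g \in Stab q beta.
  by rewrite -[Stab q beta]/(gval (Group (Stab_group q beta))) groupV.
have hs := Stab_block_size hS; have hs' := Stab_block_size hSV.
set M := blockmx beta (fun c => nat_entry (F c)) s.
set N := blockmx beta (fun c => nat_entry (invmx (F (s^-1%g c)))) s^-1%g.
have MN : M *m N = 1%:M.
  rewrite blockmx_mul mulgV -(@blockmx1 k n r beta); apply: eq_blockmx => c x y hx hy /=.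
  rewrite perm1 in hy.
  by rewrite permK (nat_entry_mul (hs c)) mulmxV // nat_entry1.
have NM : N *m M = 1%:M.
  rewrite blockmx_mul mulVg -(@blockmx1 k n r beta); apply: eq_blockmx => c x y hx hy /=.
  rewrite perm1 in hy.
  by rewrite (nat_entry_mul (erefl _)) mulVmx // nat_entry1 // hs'.
apply: gr_aut_of_mx MN NM (block_monomial_q_relations _ hS)
                         (block_monomial_q_relations _ hSV);
exact: blockmx_block_monomial.
Qed.

Lemma block_perm_mat_comp f g : gr_aut v f -> gr_aut v g ->
  block_perm beta (mat (f \o g)) = (block_perm beta (mat f) * block_perm beta (mat g))%g.
Proof.
move=> hf hg; rewrite mat_comp //; apply: (block_perm_spec beta_surj).
  exact: block_monomial_mul (mat_block_monomial hf) (mat_block_monomial hg).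
by apply: unitmx_row_neq0; rewrite unitmx_mul !mat_unit.
Qed.

Definition sd_of_gr_aut f : sd_elt k (block_size beta) :=
  ([ffun c => mx_block beta (mat f) (block_perm beta (mat f)) c], block_perm beta (mat f)).

Lemma sd_of_gr_aut_in f : gr_aut v f -> sd_in (Stab q beta) (sd_of_gr_aut f).
Proof.
move=> hf; split=> [c|]; last exact: block_perm_mat_Stab.
have [g [hg _ gK gM]] := gr_aut_inv hf.
have MN : mat f *m mat g = 1%:M by rewrite gM mulmxV // mat_unit.
have sfg : (block_perm beta (mat f) * block_perm beta (mat g))%g = 1%g.
  by rewrite -block_perm_mat_comp // mat_comp // MN (block_perm1 k beta_surj).
have := mx_block_mul c (mat_block_monomial hf) (mat_block_monomial hg)
  (Stab_block_size (block_perm_mat_Stab hf)) (Stab_block_size (block_perm_mat_Stab hg)).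
by rewrite MN sfg mx_block1 ffunE => /esym/mulmx1_unit [].
Qed.

Lemma sd_of_gr_aut_inj f g : gr_aut v f -> gr_aut v g ->
  sd_of_gr_aut f = sd_of_gr_aut g -> f =1 g.
Proof.
move=> hf hg [/ffunP eB eS]; apply: (gr_aut_ext hf hg).
have sizef := Stab_block_size (block_perm_mat_Stab hf).
have sizeg := Stab_block_size (block_perm_mat_Stab hg).
rewrite (block_monomial_blockmx (mat_block_monomial hf) sizef).
rewrite (block_monomial_blockmx (mat_block_monomial hg) sizeg).
by rewrite eS; apply: eq_blockmx => c x y _ _; have := eB c; rewrite !ffunE eS => ->.
Qed.

Lemma sd_of_gr_aut_surj x : sd_in (Stab q beta) x -> exists2 f, gr_aut v f & sd_of_gr_aut f = x.
Proof.
case: x => F s [/= hF hS]; have [f hf fM] := gr_aut_of_blockmx (F := F) hF hS.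
exists f => //.
have fs : block_perm beta (mat f) = s.
  rewrite fM; apply: (block_perm_spec beta_surj); first exact: blockmx_block_monomial.
  by apply: unitmx_row_neq0; rewrite -fM mat_unit.
rewrite /sd_of_gr_aut fs; congr pair; apply/ffunP => c; rewrite ffunE fM.
by apply/matrixP => x y; rewrite mx_block_blockmx ?nat_entry_ord ?(Stab_block_size hS).
Qed.

Lemma sd_of_gr_aut_comp f g : gr_aut v f -> gr_aut v g ->
  sd_of_gr_aut (f \o g) = sd_mul (sd_of_gr_aut f) (sd_of_gr_aut g).
Proof.
move=> hf hg; rewrite /sd_mul /sd_of_gr_aut block_perm_mat_comp //= mat_comp //.
congr pair; apply/ffunP => c; rewrite !ffunE.
apply: mx_block_mul; try exact: mat_block_monomial.
- exact: (Stab_block_size (block_perm_mat_Stab hf)).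
- exact: (Stab_block_size (block_perm_mat_Stab hg)).
Qed.

End Coordinates.

End Algebra.

End Blocks.

End QParam.

Theorem corollary6p1 (k : fieldType) (n r : nat) (q : 'M[k]_n)
    (A : algType k) (v : 'I_n -> A) (beta : 'I_n -> 'I_r) :
  qparam q ->
  is_Sq q v ->
  (forall c : 'I_r, exists i, beta i = c) ->
  (forall i j : 'I_n, (beta i == beta j) = (row i q == row j q)) ->
  [/\ group_set (Stab q beta),
      (forall H : {group {perm 'I_r}},
         diag_orbit_partition H = diag_orbit_partition (Stab q beta) -> H \subset Stab q beta)
    & exists n_ : 'I_r -> nat,
      [/\ forall c, (0 < n_ c)%N,
          forall s c, s \in Stab q beta -> n_ (s c) = n_ c
        & exists phi : (A -> A) -> sd_elt k n_,
          [/\ forall f, gr_aut v f -> sd_in (Stab q beta) (phi f),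
              forall f g, gr_aut v f -> gr_aut v g -> phi f = phi g -> f =1 g,
              forall x, sd_in (Stab q beta) x -> exists2 f, gr_aut v f & phi f = x
            & forall f g, gr_aut v f -> gr_aut v g ->
                phi (f \o g) = sd_mul (phi f) (phi g)]]].
Proof.
move=> qP SqP beta_surj beta_rows; have [coord coordE] := exists_coord SqP.
split; first exact: Stab_group.
  by move=> H; rewrite Stab_pair_stab; exact: pair_stab_max.
exists (block_size beta); split.
- exact: block_size_gt0.
- by move=> s c hs; exact: (Stab_block_size qP beta_surj beta_rows hs).
exists (sd_of_gr_aut beta v coord); split.
- exact: (sd_of_gr_aut_in qP beta_surj beta_rows SqP coordE).
- exact: (sd_of_gr_aut_inj qP beta_surj beta_rows SqP coordE).
- exact: (sd_of_gr_aut_surj qP beta_surj beta_rows SqP coordE).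
- exact: (sd_of_gr_aut_comp qP beta_surj beta_rows SqP coordE).
Qed.
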